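(* Consider the delayed online learning protocol of the context. Assume that the maximum delay is bounded by $\tau$ (i.e. $\{1,\dots,t-\tau-1\}\subset\mathcal S_t$ for all $t$), that $\|g_t\|_*\le G$ for all $t$, and that the sequence of active feedback sets is non-decreasing, $\mathcal S_t\subset\mathcal S_{t+1}$ for all $t$. Let DDA be run with \[\eta_t=\frac{r}{\sqrt{\widetilde L_t+G^2(2\tau^2+3\tau+1)}}.\] Then for every $p\in\mathcal X$ with $h(p)\le r^2$, \[R_T(p)\le 2r\sqrt{\widetilde L_T+G^2(2\tau^2+3\tau+1)}\le 2r\sqrt{L_T+G^2(2\tau^2+3\tau+1)}.\]
   Context: Let $\mathcal V$ be a finite-dimensional real vector space with norm $\|\cdot\|$ and dual norm $\|\cdot\|_*$, and $\mathcal X\subset\mathcal V$ closed convex. A regularizer $h:\mathcal V\to\mathbb R\cup\{+\infty\}$ is lower semicontinuous, $1$-strongly convex w.r.t. $\|\cdot\|$ on $\mathcal X$, with $\mathcal X\subset\operatorname{dom}h$, whose subdifferential admits a continuous selection, and $h\ge0$. Protocol: at each round $t=1,\dots,T$ one agent $i(t)$ is active, plays $x_t\in\mathcal X$, incurs $f_t(x_t)$ ($f_t$ convex, $\mathcal X\subset\operatorname{dom}\partial f_t$); a subgradient $g_t\in\partial f_t(x_t)$ is revealed later. $\mathcal S^i_t\subset\{1,\dots,t-1\}$: timestamps of subgradients available to agent $i$ at time $t$, nondecreasing in $t$; $\mathcal S_t=\mathcal S^{i(t)}_t$, $\mathcal U_t=\{1,\dots,t-1\}\setminus\mathcal S_t$.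 DDA: $x_t=\arg\min_{x\in\mathcal X}\{\sum_{s\in\mathcal S_t}\langle g_s,x\rangle+h(x)/\eta_t\}$. Regret: $R_T(p)=\sum_{t}f_t(x_t)-\sum_tf_t(p)$. Lag: $L_t=\sum_{s=1}^t\big(\|g_s\|_*^2+2\|g_s\|_*\sum_{q\in\mathcal U_s}\|g_q\|_*\big)$. Arrival order: since the $\mathcal S_t$ are nested, fix a permutation $\sigma$ of $\{1,\dots,T\}$ such that for every $t$, $\mathcal S_t=\{\sigma(1),\dots,\sigma(|\mathcal S_t|)\}$ ($g_{\sigma(k)}$ is the $k$-th received subgradient; ties broken arbitrarily). Let $\mathcal R_t=\{\sigma(1),\dots,\sigma(\sigma^{-1}(t)-1)\}$ (timestamps of feedback received before $g_t$), and \[\widetilde L_t=\sum_{s\in\mathcal S_t}\Big(\|g_s\|_*^2+2\|g_s\|_*\sum_{q\in\mathcal R_s\setminus\mathcal S_s}\|g_q\|_*\Big).\] *)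

From HB Require Import structures.
From mathcomp Require Import all_boot all_order all_algebra.
From mathcomp Require Import all_classical all_reals all_analysis.
Set Implicit Arguments. Unset Strict Implicit. Unset Printing Implicit Defensive.
Import Order.TTheory GRing.Theory Num.Theory.
Import numFieldNormedType.Exports.
Local Open Scope classical_set_scope.
Local Open Scope ring_scope.

(* The finite-dimensional real vector space V is modelled as R^n = 'rV[R]_n;
   its dual is identified with R^n via the standard pairing [dot]. *)
Section Defs.
Variables (R : realType) (n : nat).
Notation vec := 'rV[R]_n.

Definition dot (g x : vec) : R := \sum_(i < n) g ord0 i * x ord0 i.

Definition is_norm (nrm : vec -> R) : Prop :=
  [/\ forall x y, nrm (x + y) <= nrm x + nrm y,
      forall (a : R) x, nrm (a *: x) = `|a| * nrm x &
      forall x, nrm x = 0 -> x = 0].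

Definition dual_norm (nrm : vec -> R) (g : vec) : R :=
  sup [set dot g x | x in [set x | nrm x <= 1]].

Definition cvx_set (X : set vec) : Prop :=
  forall (x y : vec) (l : R), X x -> X y -> 0 <= l <= 1 -> X (l *: x + (1 - l) *: y).

Definition convex_efun (f : vec -> \bar R) : Prop :=
  forall (x y : vec) (l : R), 0 <= l <= 1 ->
    (f (l *: x + (1 - l) *: y)%R <= l%:E * f x + (1 - l)%:E * f y)%E.

Definition edom (f : vec -> \bar R) : set vec := [set x | (f x < +oo)%E].

Definition subdiff (f : vec -> \bar R) (x : vec) : set vec :=
  [set g | f x \is a fin_num /\ forall y, (f x + (dot g (y - x))%:E <= f y)%E].

Definition dom_subdiff (f : vec -> \bar R) : set vec :=
  [set x | exists g, subdiff f x g].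

Definition strongly_convex_on (nrm : vec -> R) (X : set vec) (h : vec -> \bar R) :=
  forall (x y : vec) (l : R), X x -> X y -> 0 <= l <= 1 ->
    (h (l *: x + (1 - l) *: y)%R <=
       l%:E * h x + (1 - l)%:E * h y - (l * (1 - l) / 2 * nrm (x - y) ^+ 2)%:E)%E.

Definition continuous_selection (h : vec -> \bar R) : Prop :=
  exists s : vec -> vec,
    (forall x, dom_subdiff h x -> subdiff h x (s x)) /\
    {within dom_subdiff h, continuous s}.

Definition card_upto (S : pred nat) (t : nat) : nat :=
  size [seq s <- iota 1 t.-1 | S s].

(* R_t: timestamps q in {1..T} received before g_t in the arrival order
   sigma (a permutation of {1..T}), i.e. q = sigma k, t = sigma j, k < j. *)
Definition recv_before (sigma : nat -> nat) (T t q : nat) : bool :=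
  has (fun k => (sigma k == q) &&
        has (fun j => (sigma j == t) && (k < j)%N) (iota 1 T)) (iota 1 T).

Definition Ltilde (nrm : vec -> R) (g : nat -> vec) (S : nat -> pred nat)
    (sigma : nat -> nat) (T t : nat) : R :=
  \sum_(1 <= s < t | S t s)
     (dual_norm nrm (g s) ^+ 2 +
      2 * dual_norm nrm (g s) *
        \sum_(1 <= q < T.+1 | recv_before sigma T s q && ~~ S s q)
            dual_norm nrm (g q)).

(* L_t, with U_s = {1..s-1} \ S_s *)
Definition Llag (nrm : vec -> R) (g : nat -> vec) (S : nat -> pred nat)
    (t : nat) : R :=
  \sum_(1 <= s < t.+1)
     (dual_norm nrm (g s) ^+ 2 +
      2 * dual_norm nrm (g s) *
        \sum_(1 <= q < s | ~~ S s q) dual_norm nrm (g q)).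

Definition dda_obj (g : nat -> vec) (S : nat -> pred nat) (h : vec -> \bar R)
    (eta : nat -> R) (t : nat) (y : vec) : \bar R :=
  ((\sum_(1 <= s < t | S t s) dot (g s) y)%:E + h y * ((eta t)^-1)%:E)%E.

Definition regret (f : nat -> vec -> \bar R) (x : nat -> vec) (T : nat) (p : vec) : R :=
  \sum_(1 <= t < T.+1) (fine (f t (x t)) - fine (f t p)).

End Defs.

From HB Require Import structures.
From mathcomp Require Import all_boot all_order all_algebra.
From mathcomp Require Import all_classical all_reals all_analysis.
From mathcomp Require Import ring lra zify.
Set Implicit Arguments. Unset Strict Implicit. Unset Printing Implicit Defensive.
Import Order.TTheory GRing.Theory Num.Theory.
Import numFieldNormedType.Exports.
Local Open Scope classical_set_scope.
Local Open Scope ring_scope.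

(* Let z_t be the undelayed iterate, minimising <sum_(s < t) g_s, y> + h(y)/eta_t
   over X; it exists because h is lower semicontinuous and, being strongly convex,
   coercive.  Strong convexity gives quadratic growth around such minimisers, which
   yields the follow-the-regularised-leader bound
     sum_t (<g_t, z_t> - eta_t ||g_t||_*^2 / 2) <= <sum_t g_t, p> + h(p)/eta_T
   and makes the minimiser eta-Lipschitz in the linear term, so that
   ||x_t - z_t|| <= eta_t sum_(q in U_t) ||g_q||_*.  Hence
   R_T(p) <= h(p)/eta_T + sum_t eta_t lambda_t / 2, lambda_t = L_t - L_(t-1).
   Writing L_t and Ltilde_t as sums of w_s w_q over ordered pairs of rounds, the
   arrival order orients every pair seen at time t, which gives Ltilde_T <= L_T and
   L_t <= Ltilde_t + G^2 (2 tau^2 + 3 tau + 1), the pairs not seen at time t lying in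
   the delay window.  With eta_t = r / sqrt(Ltilde_t + c) the sum telescopes to at
   most r sqrt(Ltilde_T + c). *)

Lemma normr_coord_le (R : realType) n (x : 'rV[R]_n) i : `|x ord0 i| <= `|x|.
Proof.
rewrite [X in _ <= X]/Num.norm /= mx_normrE.
exact: (@le_bigmax _ _ _ 0 (fun ij : 'I_1 * 'I_n => `|x ij.1 ij.2|) (ord0, i)).
Qed.

Lemma continuous_of_lipschitz (R : realType) n (f : 'rV[R]_n -> R) M : 0 <= M ->
  (forall x y, `|f x - f y| <= M * `|x - y|) -> continuous f.
Proof.
move=> M0 f_lip x; apply/(@cvgrPdist_lt _ _ _ (nbhs x) (nbhs_filter x)) => e e0.
have M1 : 0 < M + 1 by lra.
near=> y.
apply: le_lt_trans (f_lip x y) _.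
have : ball x (e / (M + 1)) y by near: y; apply: nbhsx_ballx; rewrite divr_gt0.
rewrite -ball_normE /ball_ /= ltr_pdivlMr //.
have := normr_ge0 (x - y); nra.
Unshelve. all: by end_near.
Qed.

Lemma compact_closedI_mx_ball (R : realType) n (X : set 'rV[R]_n) (x0 : 'rV[R]_n)
    rho :
  closed X -> compact [set y | X y /\ `|y - x0| <= rho].
Proof.
move=> X_closed; apply: bounded_closed_compact.
  exists (rho + `|x0|); split; first exact: num_real.
  move=> M M_gt y [_ y_le] /=; apply: le_trans (ltW M_gt).
  by have := ler_normD (y - x0) x0; rewrite subrK; lra.
rewrite (_ : [set y | _] = X `&` (fun y => `|y - x0|) @^-1` [set r | r <= rho]) //.
apply: closedI => //; apply: (proj1 (continuous_closedP _)); last exact: closed_le.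
apply: (@continuous_of_lipschitz R n (fun y => `|y - x0|) 1) => // u v.
by rewrite mul1r (le_trans (ler_dist_dist _ _)) // opprB addrA subrK.
Qed.

Lemma closed_lsc_sublevel (R : realType) (T : topologicalType)
    (h : T -> \bar R) (phi : T -> R) :
  lower_semicontinuous h -> continuous phi ->
  closed [set y | (h y <= (phi y)%:E)%E].
Proof.
move=> h_lsc phi_cont.
have -> : [set y | (h y <= (phi y)%:E)%E] = ~` [set y | ((phi y)%:E < h y)%E].
  by apply/seteqP; split => y /=; rewrite leNgt => /negP.
rewrite closedC openE => y0 /= phi_lt_h.
have [b phi_lt_b b_lt_h] : exists2 b : R, phi y0 < b & (b%:E < h y0)%E.
  move: phi_lt_h; case: (h y0) => [v| |] //=.
    by rewrite lte_fin => ?; exists ((phi y0 + v) / 2); rewrite ?lte_fin; lra.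
  by move=> _; exists (phi y0 + 1); [lra | exact: ltry].
have [V Vy0 hV] := h_lsc y0 b b_lt_h.
have near_phi : \forall y \near y0, phi y < b by exact: (cvgr_lt _ (phi_cont y0)).
apply: filterS2 Vy0 near_phi => y Vy phi_y /=.
by apply: lt_trans (hV y Vy); rewrite lte_fin.
Qed.

(* The sets [K `&` [set F <= inf F + 1/(k+1)]] are closed and have the finite
   intersection property, so compactness gives a point in all of them. *)
Lemma compact_argmin (R : realType) (T : ptopologicalType) (K : set T) (F : T -> R) :
  compact K -> K !=set0 -> has_lbound (F @` K) ->
  (forall c, closed (K `&` [set y | F y <= c])) ->
  exists2 z, K z & forall y, K y -> F z <= F y.
Proof.
move=> K_compact [y0 Ky0] F_lb F_closed.
have F_inf : has_inf (F @` K) by split => //; exists (F y0), y0.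
set m := inf (F @` K).
have m_le y : K y -> m <= F y by move=> Ky; apply: ge_inf => //; exists y.
pose C k := K `&` [set y | F y <= m + k.+1%:R^-1].
have [z Cz] : \bigcap_(k in setT) C k !=set0.
  move: K_compact; rewrite compact_In0 => /(_ nat setT C); apply.
    by exists C => [k _|k _]; [exact: F_closed | rewrite setIA setIid].
  move=> D _; pose N := (\max_(k <- finmap.enum_fset D) k)%N.
  have N_pos : 0 < (N.+1%:R : R)^-1 by rewrite invr_gt0 ltr0Sn.
  have [_ [y Ky <-] FyN] := inf_adherent N_pos F_inf.
  exists y => k /= kD; split => //.
  have kN : (k <= N)%N by apply: leq_bigmax_seq.
  rewrite -/m in FyN; apply: (le_trans (ltW FyN)); rewrite lerD2l.
  by rewrite lef_pV2 ?posrE ?ltr0Sn // ler_nat ltnS.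
have [Kz _] := Cz 0%N I.
exists z => // y Ky; apply: le_trans (m_le y Ky).
rewrite leNgt; apply/negP => /ltr_add_invr [k Fz_gt].
by have [_ /=] := Cz k I; rewrite leNgt Fz_gt.
Qed.

Lemma le_of_forall_scaled_le (R : realFieldType) (A B : R) :
  (forall l : R, 0 < l < 1 -> (1 - l) * B <= A) -> B <= A.
Proof.
move=> scaled_le; have [//|AB] := leP B A.
have [B0|B0] := leP B 0.
  have half : (0 < 1/2 :> R) && (1/2 < 1 :> R) by apply/andP; split; lra.
  have := scaled_le _ half; lra.
have d0 : 0 < 2 * B - A by lra.
have l0 : 0 < (B - A) / (2 * B - A) by rewrite divr_gt0 //; lra.
have l1 : (B - A) / (2 * B - A) < 1 by rewrite ltr_pdivrMr //; lra.
have := scaled_le _ (introT andP (conj l0 l1)).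
have -> : 1 - (B - A) / (2 * B - A) = B / (2 * B - A) by field; lra.
rewrite mulrAC ler_pdivrMr //; nra.
Qed.

Lemma mulr_le_young (R : realFieldType) (e w D : R) : 0 < e ->
  w * D <= e * w ^+ 2 / 2 + D ^+ 2 / e / 2.
Proof.
move=> e0; have : 0 <= (e * w - D) ^+ 2 / e / 2.
  by rewrite divr_ge0 // divr_ge0 ?sqr_ge0 // ltW.
have -> : (e * w - D) ^+ 2 / e / 2 = e * w ^+ 2 / 2 + D ^+ 2 / e / 2 - w * D.
  by field; rewrite gt_eqF.
lra.
Qed.

Lemma sum1_window_le {R : numDomainType} (lo hi u L : nat) (P : pred nat) :
  (forall i, (lo <= i < hi)%N -> P i -> (u <= i < u + L)%N) ->
  \sum_(lo <= i < hi | P i) (1 : R) <= L%:R.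
Proof.
move=> P_window; rewrite -big_filter (eq_bigr (fun _ => 1%:R)) // -natr_sum.
rewrite sum1_size ler_nat -(size_iota u L) uniq_leq_size ?filter_uniq ?iota_uniq //.
move=> i; rewrite mem_filter mem_index_iota mem_iota => /andP[Pi i_range].
exact: P_window.
Qed.

Lemma sqrt_increment_ge (R : rcfType) (L lam Lam : R) : 0 <= L -> 0 <= lam ->
  L + lam <= Lam -> 0 < Lam ->
  lam / (2 * Num.sqrt Lam) <= Num.sqrt (L + lam) - Num.sqrt L.
Proof.
move=> L0 lam0 le_Lam Lam0.
set a := Num.sqrt (L + lam); set b := Num.sqrt L; set c := Num.sqrt Lam.
have a0 : 0 <= a by exact: sqrtr_ge0.
have b0 : 0 <= b by exact: sqrtr_ge0.
have c0 : 0 < c by rewrite sqrtr_gt0.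
have ba : b <= a by rewrite ler_sqrt //; lra.
have ac : a <= c by rewrite ler_sqrt //; lra.
have -> : lam = (a - b) * (a + b).
  by rewrite -subr_sqr !sqr_sqrtr //; [ring | lra].
rewrite ler_pdivrMr ?mulr_gt0 // ler_wpM2l //; lra.
Qed.

(* Each term is at most the increment of [Num.sqrt] along the partial sums. *)
Lemma sum_div_sqrt_le (R : rcfType) (T : nat) (lam Lam : nat -> R) :
  (forall t, 0 <= lam t) ->
  (forall t, (1 <= t <= T)%N -> 0 < Lam t /\ \sum_(1 <= s < t.+1) lam s <= Lam t) ->
  \sum_(1 <= t < T.+1) lam t / (2 * Num.sqrt (Lam t))
    <= Num.sqrt (\sum_(1 <= t < T.+1) lam t).
Proof.
move=> lam0; elim: T => [|T IH] Lam_ge; first by rewrite !big_geq // sqrtr0.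
have [Lam0 lam_le] := Lam_ge T.+1 (leqnn _).
rewrite !(big_nat_recr T.+1) //=.
have sum0 : 0 <= \sum_(1 <= s < T.+1) lam s by apply: sumr_ge0.
have := sqrt_increment_ge sum0 (lam0 T.+1) _ Lam0.
rewrite -big_nat_recr // => /(_ lam_le) step.
have : \sum_(1 <= t < T.+1) lam t / (2 * Num.sqrt (Lam t))
    <= Num.sqrt (\sum_(1 <= t < T.+1) lam t).
  by apply: IH => t tT; apply: Lam_ge; lia.
lra.
Qed.

Lemma adaptive_step_bound (R : rcfType) (T : nat) (r a : R) (lam Lam : nat -> R) :
  0 < r -> a <= r ^+ 2 -> (forall t, 0 <= lam t) -> (forall t, 0 < Lam t) ->
  (forall t, (1 <= t <= T)%N -> \sum_(1 <= s < t.+1) lam s <= Lam t) ->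
  a / (r / Num.sqrt (Lam T)) + \sum_(1 <= t < T.+1) r / Num.sqrt (Lam t) * lam t / 2
    <= 2 * r * Num.sqrt (Lam T).
Proof.
move=> r_gt0 a_le lam0 Lam_gt0 lam_le.
have sqrt_gt0 t : 0 < Num.sqrt (Lam t) by rewrite sqrtr_gt0.
have a_term : a / (r / Num.sqrt (Lam T)) <= r * Num.sqrt (Lam T).
  rewrite invf_div mulrA ler_pdivrMr //; have := sqrt_gt0 T; nra.
have sum_le : \sum_(1 <= t < T.+1) lam t <= Lam T.
  have [->|T_gt0] := posnP T; first by rewrite big_geq // ltW.
  by apply: lam_le; rewrite T_gt0 leqnn.
have : \sum_(1 <= t < T.+1) lam t / (2 * Num.sqrt (Lam t))
    <= Num.sqrt (\sum_(1 <= t < T.+1) lam t).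
  by apply: sum_div_sqrt_le => // t tT; split => //; exact: lam_le.
rewrite -(ler_pM2l r_gt0) mulr_sumr => sum_div_le.
rewrite (eq_bigr (fun t => r * (lam t / (2 * Num.sqrt (Lam t))))) => [|t _]; last first.
  by field; rewrite gt_eqF.
have : Num.sqrt (\sum_(1 <= t < T.+1) lam t) <= Num.sqrt (Lam T).
  by rewrite ler_sqrt // ltW.
nra.
Qed.

Section Dot.
Variables (R : realType) (n : nat).
Local Notation vec := 'rV[R]_n.

Lemma dotDr (g x y : vec) : dot g (x + y) = dot g x + dot g y.
Proof. by rewrite /dot -big_split; apply: eq_bigr => i _; rewrite mxE mulrDr. Qed.

Lemma dotDl (g1 g2 x : vec) : dot (g1 + g2) x = dot g1 x + dot g2 x.
Proof. by rewrite /dot -big_split; apply: eq_bigr => i _; rewrite mxE mulrDl. Qed.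

Lemma dotZr (g x : vec) a : dot g (a *: x) = a * dot g x.
Proof. by rewrite /dot mulr_sumr; apply: eq_bigr => i _; rewrite mxE mulrCA. Qed.

Lemma dot0r (g : vec) : dot g 0 = 0.
Proof. by rewrite /dot big1 // => i _; rewrite mxE mulr0. Qed.

Lemma dot0l (x : vec) : dot 0 x = 0.
Proof. by rewrite /dot big1 // => i _; rewrite mxE mul0r. Qed.

Lemma dotNr (g x : vec) : dot g (- x) = - dot g x.
Proof. by rewrite -scaleN1r dotZr mulN1r. Qed.

Lemma dotNl (g x : vec) : dot (- g) x = - dot g x.
Proof. by rewrite /dot -sumrN; apply: eq_bigr => i _; rewrite mxE mulNr. Qed.

Lemma dotBr (g x y : vec) : dot g (x - y) = dot g x - dot g y.
Proof. by rewrite dotDr dotNr. Qed.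

Lemma dotBl (g1 g2 x : vec) : dot (g1 - g2) x = dot g1 x - dot g2 x.
Proof. by rewrite dotDl dotNl. Qed.

Lemma dot_suml (I : Type) (r : seq I) (P : pred I) (F : I -> vec) x :
  dot (\sum_(i <- r | P i) F i) x = \sum_(i <- r | P i) dot (F i) x.
Proof.
elim: r => [|i r IH]; first by rewrite !big_nil dot0l.
by rewrite !big_cons; case: (P i) => //; rewrite dotDl IH.
Qed.

Lemma normr_dot_le (g x : vec) : `|dot g x| <= (\sum_i `|g ord0 i|) * `|x|.
Proof.
rewrite mulr_suml; apply: le_trans (ler_norm_sum _ _ _) _.
by apply: ler_sum => i _; rewrite normrM ler_wpM2l // normr_coord_le.
Qed.

Lemma fine_subdiff_le (f : vec -> \bar R) (x p g : vec) :
  subdiff f x g -> f p \is a fin_num -> fine (f x) - fine (f p) <= dot g (x - p).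
Proof.
move=> [fx_fin /(_ p) fx_le] fp_fin; move: fx_le.
rewrite -(fineK fx_fin) -(fineK fp_fin) -EFinD lee_fin !dotBr; lra.
Qed.

Lemma regret_le_sum_dot (f : nat -> vec -> \bar R) (x g : nat -> vec) T p :
  (forall t, (1 <= t <= T)%N -> subdiff (f t) (x t) (g t)) ->
  (forall t, (1 <= t <= T)%N -> dom_subdiff (f t) p) ->
  regret f x T p <= \sum_(1 <= t < T.+1) dot (g t) (x t - p).
Proof.
move=> g_subdiff p_dom; apply: ler_sum_nat => t tT.
have tT' : (1 <= t <= T)%N by lia.
by have [? [fp_fin _]] := p_dom t tT'; exact: fine_subdiff_le (g_subdiff t tT') fp_fin.
Qed.

End Dot.

Section Norm.
Variables (R : realType) (n : nat) (nrm : 'rV[R]_n -> R).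
Hypothesis nrm_norm : is_norm nrm.
Local Notation vec := 'rV[R]_n.

Lemma nrmD (x y : vec) : nrm (x + y) <= nrm x + nrm y.
Proof. by case: nrm_norm => D _ _; exact: D. Qed.

Lemma nrmZ a (x : vec) : nrm (a *: x) = `|a| * nrm x.
Proof. by case: nrm_norm => _ Z _; exact: Z. Qed.

Lemma nrm_eq0 (x : vec) : nrm x = 0 -> x = 0.
Proof. by case: nrm_norm => _ _ E; exact: E. Qed.

Lemma nrm0 : nrm 0 = 0.
Proof. by rewrite -(scale0r (0 : vec)) nrmZ normr0 mul0r. Qed.

Lemma nrmN (x : vec) : nrm (- x) = nrm x.
Proof. by rewrite -scaleN1r nrmZ normrN1 mul1r. Qed.

Lemma nrm_ge0 (x : vec) : 0 <= nrm x.
Proof. by have := nrmD x (- x); rewrite subrr nrm0 nrmN; lra. Qed.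

Lemma nrm_distC (x y : vec) : nrm (x - y) = nrm (y - x).
Proof. by rewrite -nrmN opprB. Qed.

Lemma ler_nrm_sum (I : Type) (r : seq I) (F : I -> vec) :
  nrm (\sum_(i <- r) F i) <= \sum_(i <- r) nrm (F i).
Proof.
elim: r => [|i r IH]; first by rewrite !big_nil nrm0.
by rewrite !big_cons; apply: le_trans (nrmD _ _) _; rewrite lerD2l.
Qed.

Lemma nrm_le_mx_norm : exists2 M, 0 <= M & forall x : vec, nrm x <= M * `|x|.
Proof.
exists (\sum_(j < n) nrm (delta_mx ord0 j : vec)) => [|x].
  by apply: sumr_ge0 => j _; exact: nrm_ge0.
rewrite {1}(row_sum_delta x); apply: le_trans (ler_nrm_sum _ _) _.
rewrite mulr_suml; apply: ler_sum => j _.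
by rewrite nrmZ mulrC ler_wpM2l ?nrm_ge0 ?normr_coord_le.
Qed.

Lemma continuous_nrm : continuous nrm.
Proof.
have [M M0 nrm_le] := nrm_le_mx_norm.
apply: (continuous_of_lipschitz M0) => x y; apply: le_trans (nrm_le (x - y)).
rewrite ler_norml; apply/andP; split.
  by have := nrmD (y - x) x; rewrite subrK nrm_distC; lra.
by have := nrmD (x - y) y; rewrite subrK; lra.
Qed.

(* m is the minimum of [nrm] on the unit sphere of the sup-norm, a compact set. *)
Lemma mx_norm_le_nrm : exists2 m, 0 < m & forall x : vec, m * `|x| <= nrm x.
Proof.
have [n0|n_gt0] := posnP n.
  exists 1 => // x; have -> : x = 0.
    by apply/rowP => i; have := ltn_ord i; rewrite [X in (_ < X)%N]n0.
  by rewrite normr0 nrm0 mulr0.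
pose e0 : vec := delta_mx ord0 (Ordinal n_gt0).
have e0_neq0 : e0 != 0.
  apply/eqP => /rowP /(_ (Ordinal n_gt0)); rewrite !mxE !eqxx /=.
  by move/eqP; rewrite oner_eq0.
pose S := [set x : vec | `|x| = 1].
have S_neq0 : S !=set0.
  exists (`|e0|^-1 *: e0); rewrite /S /= normrZ normfV normr_id mulVf //.
  by rewrite normr_eq0.
have S_compact : compact S.
  apply: bounded_closed_compact.
    exists 1; split; first exact: num_real.
    by move=> M M1 x Sx; rewrite /= Sx ltW.
  rewrite (_ : S = (fun x : vec => `|x|) @^-1` [set 1]) //.
  by apply: (proj1 (continuous_closedP _)); [exact: norm_continuous | exact: closed_eq].
have [c Sc c_min] :=
  compact_EVT_min S_neq0 S_compact (continuous_subspaceT continuous_nrm).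
have nc1 : `|c| = 1 by move: Sc; rewrite inE.
have nrm_c_gt0 : 0 < nrm c.
  rewrite lt0r nrm_ge0 andbT; apply/eqP => /nrm_eq0 c0.
  by move: nc1; rewrite c0 normr0 => /eqP; rewrite eq_sym oner_eq0.
exists (nrm c) => // x; have [->|x_neq0] := eqVneq x 0.
  by rewrite normr0 mulr0 nrm0.
have nx_gt0 : 0 < `|x| by rewrite normr_gt0.
have := c_min (`|x|^-1 *: x).
rewrite inE /S /= normrZ normfV normr_id mulVf ?gt_eqF // => /(_ erefl).
by rewrite nrmZ normfV normr_id -ler_pdivlMr // mulrC.
Qed.

Lemma dual_set_ubound (g : vec) :
  has_ubound [set dot g y | y in [set y | nrm y <= 1]].
Proof.
have [m m_gt0 m_le] := mx_norm_le_nrm.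
exists ((\sum_i `|g ord0 i|) / m) => _ [y /= y1 <-].
apply: le_trans (ler_norm _) _; apply: le_trans (normr_dot_le g y) _.
have ym1 : `|y| * m <= 1 by have := m_le y; lra.
rewrite ler_pdivlMr // -mulrA -[X in _ <= X]mulr1.
by apply: ler_wpM2l => //; exact: sumr_ge0.
Qed.

Lemma dot_le_dual_norm (g x : vec) : dot g x <= dual_norm nrm g * nrm x.
Proof.
have [nx0|nx_neq0] := eqVneq (nrm x) 0.
  by rewrite (nrm_eq0 nx0) dot0r nrm0 mulr0.
have nx_gt0 : 0 < nrm x by rewrite lt0r nx_neq0 nrm_ge0.
have : dot g ((nrm x)^-1 *: x) <= dual_norm nrm g.
  apply: ub_le_sup (dual_set_ubound g) _ _; exists ((nrm x)^-1 *: x) => //=.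
  by rewrite nrmZ normfV (ger0_norm (nrm_ge0 x)) mulVf.
by rewrite dotZr mulrC ler_pdivrMr.
Qed.

Lemma dual_norm_ge0 (g : vec) : 0 <= dual_norm nrm g.
Proof.
apply: ub_le_sup (dual_set_ubound g) _ _; exists 0; last exact: dot0r.
by rewrite /= nrm0 ler01.
Qed.

End Norm.

Definition strongly_convexr_on (R : realType) n (nrm : 'rV[R]_n -> R)
    (X : set 'rV[R]_n) (hr : 'rV[R]_n -> R) :=
  forall (x y : 'rV[R]_n) (l : R), X x -> X y -> 0 <= l <= 1 ->
    hr (l *: x + (1 - l) *: y) <=
      l * hr x + (1 - l) * hr y - l * (1 - l) / 2 * nrm (x - y) ^+ 2.

Lemma fine_regularizer (R : realType) n (nrm : 'rV[R]_n -> R)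
    (X : set 'rV[R]_n) (h : 'rV[R]_n -> \bar R) :
  cvx_set X -> X `<=` edom h -> (forall y, (0 <= h y)%E) ->
  strongly_convex_on nrm X h ->
  [/\ forall y, X y -> h y = (fine (h y))%:E, forall y, X y -> 0 <= fine (h y)
    & strongly_convexr_on nrm X (fine \o h)].
Proof.
move=> X_convex X_dom h_ge0 h_sc.
have h_fin y : X y -> h y \is a fin_num by move=> Xy; rewrite ge0_fin_numE ?X_dom.
split.
- by move=> y /h_fin /fineK ->.
- by move=> y _; rewrite fine_ge0.
move=> x y l Xx Xy l01; have := h_sc x y l Xx Xy l01.
rewrite -(fineK (h_fin _ (X_convex _ _ _ Xx Xy l01))).
rewrite -(fineK (h_fin _ Xx)) -(fineK (h_fin _ Xy)).
by rewrite -!EFinM -EFinD -?EFinN -?EFinD lee_fin.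
Qed.

Section StronglyConvexObjective.
Variables (R : realType) (n : nat) (nrm : 'rV[R]_n -> R).
Variables (X : set 'rV[R]_n) (hr : 'rV[R]_n -> R).
Hypotheses (nrm_norm : is_norm nrm) (X_convex : cvx_set X).
Hypothesis hr_sc : strongly_convexr_on nrm X hr.
Local Notation vec := 'rV[R]_n.

Definition reg_obj (a : vec) (e : R) (y : vec) := dot a y + hr y / e.

Definition is_argmin (a : vec) (e : R) (z : vec) :=
  X z /\ forall y, X y -> reg_obj a e z <= reg_obj a e y.

(* Compare z with the points l *: y + (1 - l) *: z of the segment and let l -> 0. *)
Lemma argmin_growth a e z y : 0 < e -> is_argmin a e z -> X y ->
  reg_obj a e z + nrm (y - z) ^+ 2 / e / 2 <= reg_obj a e y.
Proof.
move=> e_gt0 [Xz z_min] Xy.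
rewrite addrC -lerBrDr; apply: le_of_forall_scaled_le => l /andP[l_gt0 l_lt1].
have l01 : 0 <= l <= 1 by rewrite !ltW.
have := z_min _ (X_convex Xy Xz l01); rewrite /reg_obj dotDr !dotZr.
have : hr (l *: y + (1 - l) *: z) / e <=
    (l * hr y + (1 - l) * hr z - l * (1 - l) / 2 * nrm (y - z) ^+ 2) / e.
  by rewrite ler_pM2r ?invr_gt0 // hr_sc.
set D := nrm (y - z) ^+ 2 => hW z_le.
have : l * ((1 - l) * (D / e / 2)) <=
    l * (dot a y + hr y / e - (dot a z + hr z / e)) by lra.
by rewrite ler_pM2l.
Qed.

Lemma nrm_argminB_le a1 a2 e z1 z2 M : 0 < e ->
  is_argmin a1 e z1 -> is_argmin a2 e z2 -> 0 <= M ->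
  (forall x, dot (a1 - a2) x <= M * nrm x) -> nrm (z1 - z2) <= e * M.
Proof.
move=> e_gt0 z1_min z2_min M0 a12_le.
have g1 := argmin_growth e_gt0 z1_min (proj1 z2_min).
have g2 := argmin_growth e_gt0 z2_min (proj1 z1_min).
have := a12_le (z2 - z1); rewrite (nrm_distC nrm_norm z2 z1) in g1 *.
rewrite dotBl !dotBr; move: g1 g2; rewrite /reg_obj.
set D := nrm (z1 - z2) => g1 g2 a12_z.
have D0 : 0 <= D by exact: nrm_ge0.
have sq_le : D * D <= e * M * D.
  have : D ^+ 2 / e <= M * D by lra.
  by rewrite ler_pdivrMr // expr2 mulrAC [M * e]mulrC.
have [->|D_neq0] := eqVneq D 0; first by rewrite mulr_ge0 // ltW.
by rewrite -(ler_pM2r (_ : 0 < D)) // lt0r D_neq0.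
Qed.

Variable h : vec -> \bar R.
Hypotheses (X_closed : closed X) (h_lsc : lower_semicontinuous h).
Hypothesis hrE : forall y, X y -> h y = (hr y)%:E.

Lemma argmin0_quadratic_lb e0 x0 y : 0 < e0 -> is_argmin 0 e0 x0 -> X y ->
  hr x0 + nrm (y - x0) ^+ 2 / 2 <= hr y.
Proof.
move=> e0_gt0 x0_min Xy; have := argmin_growth e0_gt0 x0_min Xy.
by rewrite /reg_obj !dot0l !add0r mulrAC -mulrDl ler_pM2r ?invr_gt0.
Qed.

Lemma closed_reg_obj_sublevel a e (K : set vec) c : 0 < e -> closed K -> K `<=` X ->
  closed (K `&` [set y | reg_obj a e y <= c]).
Proof.
move=> e_gt0 K_closed KX.
have -> : K `&` [set y | reg_obj a e y <= c] =
    K `&` [set y | (h y <= ((c - dot a y) * e)%:E)%E].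
  have le_iff y : K y ->
      reg_obj a e y <= c <-> (h y <= ((c - dot a y) * e)%:E)%E.
    by move=> Ky; rewrite (hrE (KX _ Ky)) lee_fin -ler_pdivrMr // /reg_obj; split; lra.
  by apply/seteqP; split => y [Ky /(le_iff y Ky) y_le].
apply: closedI => //; apply: closed_lsc_sublevel => //.
apply: (continuous_of_lipschitz (M := (\sum_i `|a ord0 i|) * e)) => [|u v].
  by rewrite mulr_ge0 ?sumr_ge0 // ltW.
rewrite -mulrBl normrM (gtr0_norm e_gt0) mulrAC ler_pM2r //.
have -> : c - dot a u - (c - dot a v) = - dot a (u - v) by rewrite dotBr; ring.
by rewrite normrN normr_dot_le.
Qed.

Lemma reg_obj_quadratic_lb e0 x0 a e y : 0 < e0 -> is_argmin 0 e0 x0 -> 0 < e ->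
  X y -> reg_obj a e x0 - dual_norm nrm a * nrm (y - x0) + nrm (y - x0) ^+ 2 / e / 2
    <= reg_obj a e y.
Proof.
move=> e0_gt0 x0_min e_gt0 Xy; have := argmin0_quadratic_lb e0_gt0 x0_min Xy.
rewrite -(@ler_pM2r _ e^-1) ?invr_gt0 // mulrDl mulrAC => hr_lb.
have := dot_le_dual_norm nrm_norm a (x0 - y).
by rewrite dotBr (nrm_distC nrm_norm x0) /reg_obj; lra.
Qed.

(* Minimise over the compact set of points of X near x0, which contains every
   point of X where [reg_obj a e] is below its value at x0 plus one. *)
Lemma exists_argmin e0 x0 a e : 0 < e0 -> is_argmin 0 e0 x0 -> 0 < e ->
  exists z, is_argmin a e z.
Proof.
move=> e0_gt0 x0_min e_gt0; have Xx0 := proj1 x0_min.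
have [m m_gt0 m_le] := mx_norm_le_nrm nrm_norm.
set F := reg_obj a e; set da := dual_norm nrm a.
have F_lb y : X y -> F x0 - da * nrm (y - x0) + nrm (y - x0) ^+ 2 / e / 2 <= F y.
  by move=> Xy; exact: reg_obj_quadratic_lb e0_gt0 x0_min e_gt0 Xy.
pose rho := 1 + 2 * e * (da + 1).
have F_bounded y : X y -> F y <= F x0 + 1 -> nrm (y - x0) <= rho.
  move=> Xy Fy; have := F_lb y Xy; set D := nrm (y - x0) => F_ge.
  have D_sq_le : D ^+ 2 <= 2 * e * da * D + 2 * e.
    rewrite -(@ler_pM2r _ e^-1) ?invr_gt0 // -(@ler_pM2r _ 2^-1) ?invr_gt0 //.
    have -> : (2 * e * da * D + 2 * e) / e / 2 = da * D + 1 by field; rewrite gt_eqF.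
    lra.
  have da0 : 0 <= da := dual_norm_ge0 nrm_norm a.
  rewrite leNgt; apply/negP => rho_lt_D.
  have D1 : 1 <= D by apply: le_trans (ltW rho_lt_D); rewrite /rho; nra.
  have : rho * D < D * D by rewrite ltr_pM2r //; lra.
  by move: D_sq_le; rewrite /rho expr2; nra.
pose K := [set y | X y /\ `|y - x0| <= rho / m].
have K_compact : compact K := compact_closedI_mx_ball X_closed.
have XK_F y : X y -> F y <= F x0 + 1 -> K y.
  move=> Xy Fy; split => //; rewrite ler_pdivlMr // mulrC.
  exact: le_trans (m_le _) (F_bounded y Xy Fy).
have Kx0 : K x0 by apply: XK_F; rewrite ?lerDl.
have F_lbK : has_lbound (F @` K).
  exists (F x0 - e * da ^+ 2 / 2) => _ [y [Xy _] <-].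
  apply: le_trans (F_lb y Xy); have := mulr_le_young da (nrm (y - x0)) e_gt0; lra.
have K_closed := compact_closed (@norm_hausdorff _ _) K_compact.
have [z [Xz _] z_min] := compact_argmin K_compact (ex_intro _ x0 Kx0) F_lbK
  (fun c => closed_reg_obj_sublevel (c := c) e_gt0 K_closed (fun y => @proj1 _ _)).
exists z; split => // y Xy; have [Fy|Fy] := leP (F y) (F x0 + 1).
  exact: z_min (XK_F y Xy Fy).
by have := z_min x0 Kx0; rewrite -/F; lra.
Qed.

Lemma exists_argmin_seq e0 x0 (a : nat -> vec) (eta : nat -> R) :
  0 < e0 -> is_argmin 0 e0 x0 -> (forall t, 0 < eta t) ->
  exists z : nat -> vec, forall t, is_argmin (a t) (eta t) (z t).
Proof.
move=> e0_gt0 x0_min eta_gt0.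
have [z z_argmin] := choice (fun t => exists_argmin (a t) e0_gt0 x0_min (eta_gt0 t)).
by exists z.
Qed.

End StronglyConvexObjective.

Lemma dda_obj_is_argmin (R : realType) n (X : set 'rV[R]_n)
    (h : 'rV[R]_n -> \bar R) (g : nat -> 'rV[R]_n) (S : nat -> pred nat)
    (eta : nat -> R) t (x : 'rV[R]_n) :
  (forall y, X y -> h y = (fine (h y))%:E) -> X x ->
  (forall y, X y -> (dda_obj g S h eta t x <= dda_obj g S h eta t y)%E) ->
  is_argmin X (fine \o h) (\sum_(1 <= s < t | S t s) g s) (eta t) x.
Proof.
move=> hE Xx x_min; split => // y Xy; have := x_min y Xy.
by rewrite /dda_obj (hE _ Xx) (hE _ Xy) -!EFinM -!EFinD lee_fin /reg_obj !dot_suml.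
Qed.

Section DelayedDualAveraging.
Variables (R : realType) (n : nat) (nrm : 'rV[R]_n -> R).
Variables (X : set 'rV[R]_n) (hr : 'rV[R]_n -> R).
Hypotheses (nrm_norm : is_norm nrm) (X_convex : cvx_set X).
Hypotheses (hr_sc : strongly_convexr_on nrm X hr) (hr_ge0 : forall y, X y -> 0 <= hr y).
Local Notation vec := 'rV[R]_n.

Lemma reg_obj_le_eta a e e' y : 0 < e' -> e' <= e -> 0 <= hr y ->
  reg_obj hr a e y <= reg_obj hr a e' y.
Proof.
move=> e'_gt0 e'_le hy0; rewrite lerD2l ler_wpM2l // lef_pV2 ?posrE //.
exact: lt_le_trans e'_le.
Qed.

Lemma ftrl_step (a gk zk y : vec) e s : 0 < e -> is_argmin X hr a e zk -> X y ->
  s <= reg_obj hr a e zk ->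
  s + (dot gk zk - e * dual_norm nrm gk ^+ 2 / 2) <= reg_obj hr (a + gk) e y.
Proof.
move=> e_gt0 zk_min Xy s_le.
have growth := argmin_growth X_convex hr_sc e_gt0 zk_min Xy.
have := dot_le_dual_norm nrm_norm gk (zk - y).
rewrite dotBr (nrm_distC nrm_norm zk y) => dot_le.
have := mulr_le_young (dual_norm nrm gk) (nrm (y - zk)) e_gt0.
move: growth s_le; rewrite /reg_obj dotDl; lra.
Qed.

Variables (T : nat) (g : nat -> vec) (S : nat -> pred nat).
Variables (eta : nat -> R) (x z : nat -> vec).
Hypothesis eta_gt0 : forall t, 0 < eta t.
Hypothesis eta_noninc : forall t, (t < T)%N -> eta t.+1 <= eta t.
Hypothesis z_argmin : forall t, (1 <= t <= T)%N ->
  is_argmin X hr (\sum_(1 <= s < t) g s) (eta t) (z t).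
Hypothesis x_argmin : forall t, (1 <= t <= T)%N ->
  is_argmin X hr (\sum_(1 <= s < t | S t s) g s) (eta t) (x t).
Local Notation w t := (dual_norm nrm (g t)).

Lemma ftrl_be_the_leader k : (k <= T)%N -> forall y, X y ->
  \sum_(1 <= t < k.+1) (dot (g t) (z t) - eta t * w t ^+ 2 / 2)
    <= reg_obj hr (\sum_(1 <= s < k.+1) g s) (eta k) y.
Proof.
elim: k => [_ y Xy|k IH kT y Xy].
  by rewrite !big_geq // /reg_obj dot0l add0r divr_ge0 ?hr_ge0 // ltW.
have k1T : (1 <= k.+1 <= T)%N by rewrite kT.
have [Xz _] := z_argmin k1T.
rewrite big_nat_recr //= [X in reg_obj hr X]big_nat_recr //=.
apply: ftrl_step (eta_gt0 _) (z_argmin k1T) Xy _.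
apply: le_trans (IH (ltnW kT) _ Xz) _.
exact: reg_obj_le_eta (eta_gt0 _) (eta_noninc kT) (hr_ge0 Xz).
Qed.

Definition delay_penalty t := w t ^+ 2 + 2 * w t * \sum_(1 <= q < t | ~~ S t q) w q.

Lemma delay_penalty_ge0 t : 0 <= delay_penalty t.
Proof.
rewrite addr_ge0 ?sqr_ge0 // !mulr_ge0 ?dual_norm_ge0 //.
by apply: sumr_ge0 => q _; exact: dual_norm_ge0.
Qed.

Lemma nrm_delayed_argminB t : (1 <= t <= T)%N ->
  nrm (x t - z t) <= eta t * \sum_(1 <= q < t | ~~ S t q) w q.
Proof.
move=> tT; apply: (nrm_argminB_le nrm_norm X_convex hr_sc (eta_gt0 t)
  (x_argmin tT) (z_argmin tT)).
  by apply: sumr_ge0 => q _; exact: dual_norm_ge0.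
move=> y; rewrite [X in _ - X](bigID (S t)) /= opprD addrA subrr add0r.
rewrite dotNl dot_suml -sumrN mulr_suml; apply: ler_sum => q _.
by rewrite -dotNr -(nrmN nrm_norm y); exact: dot_le_dual_norm.
Qed.

Lemma dot_delayed_le t : (1 <= t <= T)%N ->
  dot (g t) (x t) <=
    dot (g t) (z t) - eta t * w t ^+ 2 / 2 + eta t * delay_penalty t / 2.
Proof.
move=> tT; have := dot_le_dual_norm nrm_norm (g t) (x t - z t).
have := nrm_delayed_argminB tT; rewrite dotBr /delay_penalty.
set M := \sum_(1 <= q < t | ~~ S t q) w q => xz_le dot_le.
have : w t * nrm (x t - z t) <= w t * (eta t * M).
  by rewrite ler_wpM2l ?dual_norm_ge0.
lra.
Qed.

Theorem delayed_dda_regret p : X p ->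
  \sum_(1 <= t < T.+1) dot (g t) (x t - p)
    <= hr p / eta T + \sum_(1 <= t < T.+1) eta t * delay_penalty t / 2.
Proof.
move=> Xp; pose u t := dot (g t) (z t) - eta t * w t ^+ 2 / 2.
have ftrl : \sum_(1 <= t < T.+1) u t
    <= \sum_(1 <= t < T.+1) dot (g t) p + hr p / eta T.
  by rewrite -dot_suml; exact: ftrl_be_the_leader (leqnn T) _ Xp.
apply: le_trans (_ : _ <= \sum_(1 <= t < T.+1)
    (u t - dot (g t) p + eta t * delay_penalty t / 2)) _.
  rewrite big_seq_cond [X in _ <= X]big_seq_cond; apply: ler_sum => t.
  rewrite andbT mem_index_iota => tT.
  by have := dot_delayed_le tT; rewrite dotBr /u; lra.
by rewrite big_split /= big_split /= sumrN; lra.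
Qed.

End DelayedDualAveraging.

Section ArrivalOrder.
Variables (T tau : nat) (S : nat -> pred nat) (sigma : nat -> nat).
Hypothesis S_range : forall t s, S t s -> (1 <= s < t)%N.
Hypothesis S_nondecr : forall t s, (1 <= t < T)%N -> S t s -> S t.+1 s.
Hypothesis S_delay : forall t s, (1 <= t <= T)%N -> (1 <= s)%N ->
  (s + tau + 1 <= t)%N -> S t s.
Hypothesis sigma_range : forall k, (1 <= k <= T)%N -> (1 <= sigma k <= T)%N.
Hypothesis sigma_inj : {in [pred k | (1 <= k <= T)%N] &, injective sigma}.
Hypothesis S_prefix : forall t q, (1 <= t <= T)%N ->
  S t q <-> exists k, (1 <= k <= card_upto (S t) t)%N /\ sigma k = q.
Local Notation rb := (recv_before sigma T).

Lemma card_upto_le t : (card_upto (S t) t <= t.-1)%N.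
Proof.
by rewrite /card_upto size_filter (leq_trans (count_size _ _)) // size_iota.
Qed.

Lemma recv_beforeP s q : rb s q -> exists k j,
  [/\ (1 <= k <= T)%N, (1 <= j <= T)%N, sigma k = q, sigma j = s & (k < j)%N].
Proof.
move=> /hasP [k]; rewrite mem_iota => k_range /andP[/eqP <- /hasP[j]].
by rewrite mem_iota => j_range /andP[/eqP <- kj]; exists k, j; split => //; lia.
Qed.

Lemma recv_before_sigma k j : (1 <= k <= T)%N -> (1 <= j <= T)%N -> (k < j)%N ->
  rb (sigma j) (sigma k).
Proof.
move=> k_range j_range kj; apply/hasP; exists k; first by rewrite mem_iota; lia.
by rewrite eqxx /=; apply/hasP; exists j; rewrite ?mem_iota ?eqxx //; lia.
Qed.

Lemma recv_before_asym s q : rb s q -> ~~ rb q s.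
Proof.
move=> /recv_beforeP [k [j [k_range j_range <- <- kj]]].
apply/negP => /recv_beforeP [k' [j' [k'_range j'_range /sigma_inj k'j /sigma_inj j'k]]].
by have := k'j k'_range j_range; have := j'k j'_range k_range; lia.
Qed.

Lemma recv_before_irr s : ~~ rb s s.
Proof. by apply/negP => rb_ss; move: (recv_before_asym rb_ss); rewrite rb_ss. Qed.

Lemma S_sigma_preim t q : (1 <= t <= T)%N -> S t q ->
  exists2 k, (1 <= k <= T)%N & sigma k = q.
Proof.
move=> tT /(S_prefix q tT) [k [k_range <-]]; exists k => //.
by have := card_upto_le t; lia.
Qed.

(* [S t] is a prefix of the arrival order, so whatever is not in it arrives later *)
Lemma recv_before_S t a b j : (1 <= t <= T)%N -> S t a -> ~~ S t b ->
  (1 <= j <= T)%N -> sigma j = b -> rb b a.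
Proof.
move=> tT /(S_prefix a tT) [k [k_range <-]] Sb j_range sjb.
have card_le := card_upto_le t; rewrite -sjb; apply: recv_before_sigma; try lia.
rewrite ltnNge; apply: contra _ Sb => jk; apply/(S_prefix b tT).
by exists j; split => //; lia.
Qed.

Lemma S_mono t u s : (t <= u <= T)%N -> S t s -> S u s.
Proof.
move=> /andP[tu uT] Sts; have := S_range Sts => s_range.
elim: u tu uT => [|u IH]; first by lia.
rewrite leq_eqVlt => /orP[/eqP <- // | tu] uT.
by apply: S_nondecr (IH tu (ltnW uT)); lia.
Qed.

Variables (R : realType) (n : nat) (nrm : 'rV[R]_n -> R) (g : nat -> 'rV[R]_n).
Variable G : R.
Local Notation w s := (dual_norm nrm (g s)).
Hypothesis w_ge0 : forall s, 0 <= w s.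
Hypothesis w_le : forall s, (1 <= s <= T)%N -> w s <= G.

Definition pairsum (P : nat -> nat -> bool) :=
  \sum_(1 <= s < T.+1) \sum_(1 <= q < T.+1) (if P s q then w s * w q else 0).

Lemma pair_term_ge0 (b : bool) s q : 0 <= (if b then w s * w q else 0).
Proof. by case: b => //; exact: mulr_ge0. Qed.

Lemma pairsum_le (P Q : nat -> nat -> bool) :
  (forall s q, P s q -> Q s q) -> pairsum P <= pairsum Q.
Proof.
move=> PQ; apply: ler_sum => s _; apply: ler_sum => q _.
by case Psq: (P s q); rewrite ?(PQ _ _ Psq) ?pair_term_ge0.
Qed.

Lemma pairsum_split (P Q : nat -> nat -> bool) : pairsum P =
  pairsum (fun s q => P s q && Q s q) + pairsum (fun s q => P s q && ~~ Q s q).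
Proof.
rewrite -big_split; apply: eq_bigr => s _; rewrite -big_split; apply: eq_bigr => q _.
by case: (P s q); case: (Q s q); rewrite /= ?addr0 ?add0r.
Qed.

Lemma pairsum_triangular (P : nat -> nat -> bool) :
  pairsum P = \sum_(1 <= s < T.+1) \sum_(1 <= q < T.+1)
  ((if P s q && (q < s)%N then w s * w q else 0) +
   (if P q s && (q < s)%N then w s * w q else 0) +
   (if P s q && (s == q) then w s * w q else 0)).
Proof.
have upper : \sum_(1 <= s < T.+1) \sum_(1 <= q < T.+1)
      (if P s q && (s < q)%N then w s * w q else 0) =
    \sum_(1 <= s < T.+1) \sum_(1 <= q < T.+1)
      (if P q s && (q < s)%N then w s * w q else 0).
  by rewrite exchange_big; apply: eq_bigr => s _; apply: eq_bigr => q _; rewrite mulrC.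
transitivity (\sum_(1 <= s < T.+1) \sum_(1 <= q < T.+1)
  ((if P s q && (q < s)%N then w s * w q else 0) +
   (if P s q && (s < q)%N then w s * w q else 0) +
   (if P s q && (s == q) then w s * w q else 0))).
  apply: eq_bigr => s _; apply: eq_bigr => q _.
  by case: (P s q); case: ltngtP; rewrite /= ?addr0 ?add0r.
have sum2_split (F1 F2 : nat -> nat -> R) :
    \sum_(1 <= s < T.+1) \sum_(1 <= q < T.+1) (F1 s q + F2 s q) =
    \sum_(1 <= s < T.+1) \sum_(1 <= q < T.+1) F1 s q +
    \sum_(1 <= s < T.+1) \sum_(1 <= q < T.+1) F2 s q.
  by rewrite -big_split; apply: eq_bigr => s _; rewrite big_split.
by rewrite !sum2_split upper.
Qed.

(* [w s * w q] is symmetric in (s, q), so only unordered pairs matter. *)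
Lemma pairsum_le_sym (P Q : nat -> nat -> bool) : (forall s q, P s q -> ~~ P q s) ->
  (forall s q, P s q -> Q s q || Q q s) -> pairsum P <= pairsum Q.
Proof.
move=> P_asym PQ; rewrite !pairsum_triangular.
apply: ler_sum => s _; apply: ler_sum => q _.
have P_irr r : ~~ P r r by apply/negP => Prr; move: (P_asym _ _ Prr); rewrite Prr.
case: (ltngtP q s) => [qs|sq|->]; rewrite ?andbT ?andbF /= ?addr0 ?add0r; last first.
- by rewrite (negbTE (P_irr s)) pair_term_ge0.
- by [].
case Psq: (P s q).
  rewrite (negbTE (P_asym _ _ Psq)) addr0.
  by case/orP: (PQ _ _ Psq) => ->; rewrite ?lerDl ?lerDr pair_term_ge0.
case Pqs: (P q s); last by rewrite addr0 addr_ge0 ?pair_term_ge0.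
by rewrite add0r; case/orP: (PQ _ _ Pqs) => ->; rewrite ?lerDl ?lerDr pair_term_ge0.
Qed.

Lemma pairsum_window_le (P : nat -> nat -> bool) u a b :
  (forall s q, P s q -> (1 <= s <= T)%N -> (1 <= q <= T)%N ->
     (u <= s < u + a)%N /\ (q < s <= q + b)%N) ->
  pairsum P <= G ^+ 2 * (a%:R * b%:R).
Proof.
move=> P_win.
apply: le_trans (_ : _ <= \sum_(1 <= s < T.+1 | (u <= s < u + a)%N) G ^+ 2 * b%:R) _.
  rewrite /pairsum [X in _ <= X]big_mkcond /=; apply: ler_sum_nat => s s_range.
  have sT : (1 <= s <= T)%N by lia.
  case: ifPn => s_win; last first.
    rewrite big1_seq // => q /andP[_]; rewrite mem_index_iota => q_range.
    have qT : (1 <= q <= T)%N by lia.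
    case Psq: (P s q) => //; have [s_in _] := P_win s q Psq sT qT.
    by rewrite s_in in s_win.
  rewrite -big_mkcond /=.
  apply: le_trans (_ : _ <= \sum_(1 <= q < T.+1 | P s q) G ^+ 2 * 1) _.
    rewrite big_seq_cond [X in _ <= X]big_seq_cond; apply: ler_sum => q.
    rewrite mem_index_iota => /andP[q_range _]; rewrite mulr1 expr2.
    by apply: ler_pM; rewrite ?w_ge0 ?w_le //; lia.
  rewrite -mulr_sumr ler_wpM2l ?sqr_ge0 //.
  apply: (sum1_window_le (u := s - b)) => q q_range Psq.
  have qT : (1 <= q <= T)%N by lia.
  by have [_] := P_win s q Psq sT qT; lia.
rewrite -mulr_sumr ler_wpM2l ?sqr_ge0 //.
rewrite (eq_bigr (fun _ => 1 * b%:R)) => [|s _]; last by rewrite mul1r.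
rewrite -mulr_suml; apply: ler_wpM2r => //.
by apply: (@sum1_window_le _ 1 T.+1 u a) => i _.
Qed.

Lemma sum_cross_pairsum (A : pred nat) (B : nat -> pred nat) :
  \sum_(1 <= s < T.+1 | A s) (2 * w s * \sum_(1 <= q < T.+1 | B s q) w q) =
  2 * pairsum (fun s q => A s && B s q).
Proof.
rewrite /pairsum mulr_sumr big_mkcond /=; apply: eq_bigr => s _.
case: (A s) => /=; last by rewrite big1 ?mulr0.
rewrite -mulrA mulr_sumr big_mkcond /= mulr_sumr; apply: eq_bigr => q _.
by case: (B s q); rewrite ?mulr0.
Qed.

(* The cross terms of [Ltilde t] and [Llag t]: the pairs (s, q) with s in S_t and
   q in R_s \ S_s, resp. with q < s <= t and q in U_s. *)
Definition recv_pair t s q := S t s && (rb s q && ~~ S s q).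

Definition lag_pair t s q := (s < t.+1)%N && (~~ S s q && (q < s)%N).

Lemma Ltilde_pairsum t : (t <= T.+1)%N -> Ltilde nrm g S sigma T t =
  \sum_(1 <= s < T.+1 | S t s) w s ^+ 2 + 2 * pairsum (recv_pair t).
Proof.
move=> tT; rewrite /Ltilde (big_nat_widen _ _ _ _ _ tT).
rewrite (eq_bigl (S t)) => [|s]; last first.
  by case Sts: (S t s) => //=; case/andP: (S_range Sts).
by rewrite big_split /= sum_cross_pairsum.
Qed.

Lemma Llag_pairsum t : (t <= T)%N -> Llag nrm g S t =
  \sum_(1 <= s < t.+1) w s ^+ 2 + 2 * pairsum (lag_pair t).
Proof.
move=> tT; rewrite /Llag big_split /=; congr (_ + _).
rewrite -sum_cross_pairsum (big_nat_widen _ _ T.+1) ?ltnS //.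
apply: congr_big_nat => // s /andP[_ /andP[_ s_lt]].
by rewrite (big_nat_widen _ _ T.+1) //; lia.
Qed.

Lemma Ltilde_ge0 t : 0 <= Ltilde nrm g S sigma T t.
Proof.
apply: sumr_ge0 => s _; rewrite addr_ge0 ?sqr_ge0 // !mulr_ge0 //.
exact: sumr_ge0.
Qed.

Lemma Ltilde_mono t u : (t <= u <= T)%N ->
  Ltilde nrm g S sigma T t <= Ltilde nrm g S sigma T u.
Proof.
move=> tu; rewrite !Ltilde_pairsum; try lia.
apply: lerD; last first.
  rewrite ler_pM2l // pairsum_le // => s q.
  by rewrite /recv_pair => /andP[/(S_mono tu) -> ->].
rewrite [X in X <= _]big_mkcond [X in _ <= X]big_mkcond /=; apply: ler_sum => s _.
case Sts: (S t s); first by rewrite (S_mono tu Sts).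
by case: ifP => // _; exact: sqr_ge0.
Qed.

Lemma adaptive_step_noninc (r c : R) t : 0 < r -> 0 < c -> (t < T)%N ->
  r / Num.sqrt (Ltilde nrm g S sigma T t.+1 + c)
    <= r / Num.sqrt (Ltilde nrm g S sigma T t + c).
Proof.
move=> r_gt0 c_gt0 tT.
have Lam_gt0 u : 0 < Ltilde nrm g S sigma T u + c by rewrite ltr_wpDl ?Ltilde_ge0.
rewrite ler_pM2l // lef_pV2 ?posrE ?sqrtr_gt0 ?Lam_gt0 // ler_sqrt; last exact: ltW.
by rewrite lerD2r; apply: Ltilde_mono; lia.
Qed.

(* A pair (s, q) counted in [Ltilde] has q received before s without being
   seen at time s; if q > s, then s cannot be in [S q] either. *)
Lemma Ltilde_le_Llag : Ltilde nrm g S sigma T T <= Llag nrm g S T.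
Proof.
rewrite Ltilde_pairsum // Llag_pairsum //; apply: lerD.
  rewrite [X in X <= _]big_mkcond /=; apply: ler_sum => s _.
  by case: ifP => // _; exact: sqr_ge0.
rewrite ler_pM2l //; apply: pairsum_le_sym => s q /and3P[STs rb_sq nSsq].
  by apply/negP => /and3P[_ /recv_before_asym]; rewrite rb_sq.
have [k [j [k_range j_range skq sjs kj]]] := recv_beforeP rb_sq.
rewrite /lag_pair; case: (ltngtP q s) => [qs|sq|qs].
- by apply/orP; left; rewrite nSsq andbT; have := S_range STs; lia.
- have qT : (1 <= q <= T)%N by rewrite -skq sigma_range.
  have nSqs : ~~ S q s.
    apply/negP => Sqs; have nSqq : ~~ S q q by apply/negP => /S_range; lia.
    move: (recv_before_asym rb_sq).
    by rewrite (recv_before_S qT Sqs nSqq k_range skq).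
  by apply/orP; right; rewrite nSqs andbT; lia.
- by move: rb_sq; rewrite qs (negbTE (recv_before_irr s)).
Qed.

Lemma sum_sq_unseen_le t : (1 <= t <= T)%N ->
  \sum_(1 <= s < t.+1 | ~~ S t s) w s ^+ 2 <= G ^+ 2 * (tau%:R + 1).
Proof.
move=> tT; apply: le_trans (_ : _ <= \sum_(1 <= s < t.+1 | ~~ S t s) G ^+ 2 * 1) _.
  rewrite big_seq_cond [X in _ <= X]big_seq_cond; apply: ler_sum => s.
  rewrite mem_index_iota => /andP[s_range _]; rewrite mulr1 !expr2.
  by apply: ler_pM; rewrite ?w_ge0 ?w_le //; lia.
rewrite -mulr_sumr ler_wpM2l ?sqr_ge0 // natr1.
apply: (sum1_window_le (u := t - tau)) => s s_range nSts.
suff : ~ (s + tau + 1 <= t)%N by lia.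
by move=> late; move/negP: nSts; apply; apply: S_delay; lia.
Qed.

Lemma pairsum_seen_le t : (1 <= t <= T)%N ->
  pairsum (fun s q => lag_pair t s q && (S t s && S t q)) <= pairsum (recv_pair t).
Proof.
move=> tT; apply: pairsum_le_sym => s q /andP[/and3P[_ nSsq qs] /andP[Sts Stq]].
  by apply/negP => /andP[/and3P[_ _ sq] _]; lia.
have [ks ks_range sks] := S_sigma_preim tT Sts.
have [kq kq_range skq] := S_sigma_preim tT Stq.
rewrite /recv_pair Sts Stq nSsq /=.
case: (ltngtP kq ks) => [kq_ks|ks_kq|kq_ks].
- by rewrite -sks -skq (recv_before_sigma kq_range ks_range kq_ks).
- have nSqs : ~~ S q s by apply/negP => /S_range; lia.
  by rewrite nSqs -sks -skq (recv_before_sigma ks_range kq_range ks_kq) orbT.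
- by move: qs; rewrite -sks -skq kq_ks ltnn.
Qed.

Lemma pairsum_unseen_le t : (1 <= t <= T)%N ->
  pairsum (fun s q => lag_pair t s q && ~~ (S t s && S t q))
    <= G ^+ 2 * ((tau%:R + 1) * tau%:R).
Proof.
move=> tT; rewrite natr1; apply: (pairsum_window_le (u := t - tau)).
move=> s q /andP[/and3P[st nSsq qs] unseen] s_range q_range.
have recent r : (1 <= r)%N -> ~~ S t r -> (t <= r + tau)%N.
  move=> r1 nStr; rewrite leqNgt; apply: contraNN _ nStr => late.
  by apply: S_delay; lia.
have : (s <= q + tau)%N.
  rewrite leqNgt; apply: contraNN _ nSsq => late; apply: S_delay; lia.
by case/nandP: unseen => /(recent _ _); lia.
Qed.

Lemma sum_sq_le t : (1 <= t <= T)%N ->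
  \sum_(1 <= s < t.+1) w s ^+ 2 <=
    \sum_(1 <= s < T.+1 | S t s) w s ^+ 2 + G ^+ 2 * (tau%:R + 1).
Proof.
move=> tT; rewrite (bigID (S t)) /=; apply: lerD; last exact: sum_sq_unseen_le.
rewrite (big_nat_widen 1 t.+1 T.+1); last by lia.
rewrite [X in X <= _]big_mkcond [X in _ <= X]big_mkcond /=; apply: ler_sum => s _.
by case: (S t s) => //=; case: ifP => // _; exact: sqr_ge0.
Qed.

(* 2 tau^2 + 3 tau + 1 = (tau + 1) + 2 tau (tau + 1): the rounds of the last
   tau + 1 missing from S_t, and the pairs of them with their delayed feedback. *)
Lemma Llag_le_Ltilde t : (1 <= t <= T)%N ->
  Llag nrm g S t <=
    Ltilde nrm g S sigma T t + G ^+ 2 * (2 * tau%:R ^+ 2 + 3 * tau%:R + 1).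
Proof.
move=> tT; rewrite Llag_pairsum ?Ltilde_pairsum; try lia.
rewrite (pairsum_split _ (fun s q => S t s && S t q)).
have := sum_sq_le tT; have := pairsum_seen_le tT; have := pairsum_unseen_le tT.
lra.
Qed.

End ArrivalOrder.

Theorem proposition2
  (R : realType) (n : nat)
  (nrm : 'rV[R]_n -> R) (X : set 'rV[R]_n) (h : 'rV[R]_n -> \bar R)
  (* agents, active agent, per-agent feedback sets *)
  (Agent : Type) (act : nat -> Agent) (Sa : Agent -> nat -> pred nat)
  (T : nat) (tau : nat) (G r : R)
  (f : nat -> 'rV[R]_n -> \bar R) (x g : nat -> 'rV[R]_n)
  (sigma : nat -> nat) :
  is_norm nrm ->
  closed X -> cvx_set X ->
  lower_semicontinuous h ->
  strongly_convex_on nrm X h ->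
  X `<=` edom h ->
  continuous_selection h ->
  (forall y, (0 <= h y)%E) ->
  (forall t, (1 <= t <= T)%N ->
     convex_efun (f t) /\ (forall y, f t y != -oo%E) /\ X `<=` dom_subdiff (f t)) ->
  (* feedback sets: subsets of {1..t-1}, nondecreasing in t for each agent *)
  (forall a t s, Sa a t s -> (1 <= s < t)%N) ->
  (forall a t1 t2 s, (t1 <= t2)%N -> Sa a t1 s -> Sa a t2 s) ->
  let Sact := fun t => Sa (act t) t in
  (* bounded delay *)
  (forall t s, (1 <= t <= T)%N -> (1 <= s)%N -> (s + tau + 1 <= t)%N -> Sact t s) ->
  (* bounded subgradients *)
  (forall t, (1 <= t <= T)%N -> dual_norm nrm (g t) <= G) ->
  (* active feedback sets are non-decreasing *)
  (forall t s, (1 <= t < T)%N -> Sact t s -> Sact t.+1 s) ->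
  (* arrival order sigma: a permutation of {1..T} listing the S_t as prefixes *)
  (forall k, (1 <= k <= T)%N -> (1 <= sigma k <= T)%N) ->
  {in [pred k | (1 <= k <= T)%N] &, injective sigma} ->
  (forall t q, (1 <= t <= T)%N ->
     Sact t q <-> exists k, (1 <= k <= card_upto (Sact t) t)%N /\ sigma k = q) ->
  0 < G -> 0 < r ->
  let c := G ^+ 2 * (2 * tau%:R ^+ 2 + 3 * tau%:R + 1) in
  let eta := fun t => r / Num.sqrt (Ltilde nrm g Sact sigma T t + c) in
  (* x_t is the DDA iterate, g_t a subgradient of f_t at x_t *)
  (forall t, (1 <= t <= T)%N ->
     X (x t) /\ (forall y, X y -> (dda_obj g Sact h eta t (x t) <= dda_obj g Sact h eta t y)%E)) ->
  (forall t, (1 <= t <= T)%N -> subdiff (f t) (x t) (g t)) ->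
  forall p, X p -> (h p <= (r ^+ 2)%:E)%E ->
    regret f x T p <= 2 * r * Num.sqrt (Ltilde nrm g Sact sigma T T + c) /\
    2 * r * Num.sqrt (Ltilde nrm g Sact sigma T T + c)
      <= 2 * r * Num.sqrt (Llag nrm g Sact T + c).
Proof.
move=> nrm_norm X_closed X_convex h_lsc h_sc X_dom _ h_ge0 f_dom Sa_range _ Sact
  S_delay g_le S_nondecr sigma_range sigma_inj S_prefix G_gt0 r_gt0 c eta
  x_dda g_subdiff p Xp hp.
have S_range t s : Sact t s -> (1 <= s < t)%N by exact: Sa_range.
have w_ge0 s : 0 <= dual_norm nrm (g s) by exact: dual_norm_ge0.
have c_gt0 : 0 < c by rewrite pmulr_rgt0 ?exprn_gt0 //; have := ler0n R tau; nra.
have Lam_gt0 t : 0 < Ltilde nrm g Sact sigma T t + c by rewrite ltr_wpDl ?Ltilde_ge0.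
split; last first.
  have Lt_le := Ltilde_le_Llag S_range sigma_range sigma_inj S_prefix w_ge0.
  rewrite ler_pM2l ?mulr_gt0 // ler_sqrt ?lerD2r //.
  by apply: le_trans (ltW (Lam_gt0 T)) _; rewrite lerD2r.
have [->|T_gt0] := posnP T.
  by rewrite /regret big_geq // !mulr_ge0 ?sqrtr_ge0 // ltW.
have [hE hr_ge0 hr_sc] := fine_regularizer X_convex X_dom h_ge0 h_sc.
have eta_gt0 t : 0 < eta t by rewrite divr_gt0 ?sqrtr_gt0.
have eta_noninc := adaptive_step_noninc sigma S_range S_nondecr w_ge0 r_gt0 c_gt0.
have x_argmin t : (1 <= t <= T)%N ->
    is_argmin X (fine \o h) (\sum_(1 <= s < t | Sact t s) g s) (eta t) (x t).
  by move=> tT; have [Xx x_min] := x_dda t tT; exact: dda_obj_is_argmin.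
have x1_argmin : is_argmin X (fine \o h) 0 (eta 1%N) (x 1%N).
  by have := x_argmin 1%N; rewrite big_geq // T_gt0; apply.
have [z z_argmin] := exists_argmin_seq nrm_norm X_convex hr_sc X_closed h_lsc hE
  (fun t => \sum_(1 <= s < t) g s) (eta_gt0 1%N) x1_argmin eta_gt0.
apply: le_trans (regret_le_sum_dot g_subdiff _) _.
  by move=> t tT; have [_ [_]] := f_dom t tT; apply.
apply: le_trans (delayed_dda_regret nrm_norm X_convex hr_sc hr_ge0 eta_gt0
  eta_noninc (fun t _ => z_argmin t) x_argmin Xp) _.
apply: (adaptive_step_bound (Lam := fun t => Ltilde nrm g Sact sigma T t + c)).
- exact: r_gt0.
- by rewrite /= -lee_fin -hE.
- exact: delay_penalty_ge0.
- exact: Lam_gt0.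
- by move=> t tT; exact: (Llag_le_Ltilde S_range S_delay S_prefix w_ge0 g_le tT).
Qed.
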